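(* If $p:X\to Y$ is a covering map and $Y$ is locally connected and paracompact, then $p$ is an overlay.
   Context: A covering map $p:X\to Y$ is a continuous surjection such that every point of $Y$ has an open neighborhood $V$ with $p^{-1}(V)$ a disjoint union of open sets each mapped homeomorphically onto $V$. For a continuous map $p:X\to Y$: a slice of $p$ is an open set $U\subseteq X$ such that $p^{-1}(p(U))$ is the disjoint union of a family of open sets $U_s$ ($s\in S$), each mapped by $p$ homeomorphically onto $p(U)$, with $U=U_t$ for some $t\in S$. A covering structure of $p$ is an open cover $\mathcal S$ of $X$ by slices of $p$ such that for every $U\in\mathcal S$, $p^{-1}(p(U))$ is the disjoint union of a family $\{U_j\}_{j\in J}$ of elements of $\mathcal S$, each mapped homeomorphically onto $p(U)$. For a cover $\mathcal S$ and $x\in X$, $st(x,\mathcal S)=\bigcup\{U\in\mathcal S: x\in U\}$. An overlay structure of $p$ is a covering structure $\mathcal S$ such that $st(x,\mathcal S)$ is a slice of $p$ for every $x\in X$. The map $p$ is an overlay if it has an overlay structure. *)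

From Stdlib Require Import List.

Set Implicit Arguments.

Record TopSpace := {
  pt :> Type;
  is_open : (pt -> Prop) -> Prop;
  open_full : is_open (fun _ => True);
  open_empty : is_open (fun _ => False);
  open_union : forall (F : (pt -> Prop) -> Prop),
      (forall A, F A -> is_open A) ->
      is_open (fun x => exists A, F A /\ A x);
  open_inter : forall A B, is_open A -> is_open B ->
      is_open (fun x => A x /\ B x)
}.

Section Topo.
Variables X Y : TopSpace.

Definition continuous (p : X -> Y) : Prop :=
  forall O : Y -> Prop, is_open Y O -> is_open X (fun x => O (p x)).

Definition image (p : X -> Y) (U : X -> Prop) : Y -> Prop :=
  fun y => exists x, U x /\ p x = y.

Definition preimage (p : X -> Y) (V : Y -> Prop) : X -> Prop :=
  fun x => V (p x).

Definition homeo_onto (p : X -> Y) (U : X -> Prop) (V : Y -> Prop) : Prop :=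
  (forall x, U x -> V (p x)) /\
  (forall y, V y -> exists x, U x /\ p x = y) /\
  (forall x1 x2, U x1 -> U x2 -> p x1 = p x2 -> x1 = x2) /\
  (* continuity of the restriction for the subspace topologies *)
  (forall O : Y -> Prop, is_open Y O ->
     exists O' : X -> Prop, is_open X O' /\
       forall x, U x -> (O' x <-> O (p x))) /\
  (* openness of the restriction for the subspace topologies *)
  (forall W : X -> Prop, is_open X W ->
     exists O : Y -> Prop, is_open Y O /\
       forall y, V y -> (O y <-> exists x, U x /\ W x /\ p x = y)).

Definition disjoint_sheets (p : X -> Y) (V : Y -> Prop)
    (S : Type) (Us : S -> X -> Prop) : Prop :=
  (forall s, is_open X (Us s)) /\
  (forall s t x, Us s x -> Us t x -> s = t) /\
  (forall x, V (p x) <-> exists s, Us s x) /\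
  (forall s, homeo_onto p (Us s) V).

Definition covering_map (p : X -> Y) : Prop :=
  continuous p /\
  (forall y : Y, exists x : X, p x = y) /\
  (forall y : Y, exists V : Y -> Prop, is_open Y V /\ V y /\
     exists (S : Type) (Us : S -> X -> Prop), disjoint_sheets p V Us).

Definition slice (p : X -> Y) (U : X -> Prop) : Prop :=
  is_open X U /\
  exists (S : Type) (Us : S -> X -> Prop),
    disjoint_sheets p (image p U) Us /\ exists t, Us t = U.

Definition covering_structure (p : X -> Y) (C : (X -> Prop) -> Prop) : Prop :=
  (forall U, C U -> slice p U) /\
  (forall x : X, exists U, C U /\ U x) /\
  (forall U, C U ->
     exists (J : Type) (Us : J -> X -> Prop),
       (forall j, C (Us j)) /\ disjoint_sheets p (image p U) Us).

Definition star (C : (X -> Prop) -> Prop) (x : X) : X -> Prop :=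
  fun z => exists U, C U /\ U x /\ U z.

Definition overlay_structure (p : X -> Y) (C : (X -> Prop) -> Prop) : Prop :=
  covering_structure p C /\ forall x : X, slice p (star C x).

Definition overlay (p : X -> Y) : Prop :=
  exists C, overlay_structure p C.
End Topo.

Section SpaceProps.
Variable Y : TopSpace.

(** Connectedness of a subset (subspace topology); the empty set is
    considered connected here, but only nonempty sets (containing a
    given point) are used below. *)
Definition connected_set (C : Y -> Prop) : Prop :=
  forall A B : Y -> Prop, is_open Y A -> is_open Y B ->
    (forall y, C y -> A y \/ B y) ->
    (forall y, C y -> A y -> B y -> False) ->
    (exists y, C y /\ A y) -> (exists y, C y /\ B y) -> False.

Definition locally_connected : Prop :=
  forall (y : Y) (W : Y -> Prop), is_open Y W -> W y ->
    exists C, is_open Y C /\ connected_set C /\ C y /\ (forall z, C z -> W z).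

Definition hausdorff : Prop :=
  forall y1 y2 : Y, y1 <> y2 ->
    exists A B, is_open Y A /\ is_open Y B /\ A y1 /\ B y2 /\
      (forall z, A z -> B z -> False).

Definition open_cover (F : (Y -> Prop) -> Prop) : Prop :=
  (forall A, F A -> is_open Y A) /\ (forall y, exists A, F A /\ A y).

Definition refines (G F : (Y -> Prop) -> Prop) : Prop :=
  forall B, G B -> exists A, F A /\ forall y, B y -> A y.

Definition locally_finite (G : (Y -> Prop) -> Prop) : Prop :=
  forall y : Y, exists W, is_open Y W /\ W y /\
    exists l : list (Y -> Prop),
      forall B, G B -> (exists z, W z /\ B z) -> In B l.

Definition paracompact : Prop :=
  hausdorff /\
  forall F, open_cover F ->
    exists G, open_cover G /\ refines G F /\ locally_finite G.
End SpaceProps.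

Arguments continuous {X Y} p.
Arguments image {X Y} p U _.
Arguments preimage {X Y} p V _.
Arguments homeo_onto {X Y} p U V.
Arguments disjoint_sheets {X Y} p V {S} Us.
Arguments covering_map {X Y} p.
Arguments slice {X Y} p U.
Arguments covering_structure {X Y} p C.
Arguments star {X} C x _.
Arguments overlay_structure {X Y} p C.
Arguments overlay {X Y} p.

From Stdlib Require Import List Classical ClassicalEpsilon FunctionalExtensionality PropExtensionality.

(* Let F be the open cover of Y by evenly covered open sets.  A paracompact
   space is regular, so F has a locally finite open refinement whose members
   have their closures inside members of F; from it one builds an open
   star-refinement G of F (the star of every point w.r.t. G lies in a member
   of F).  Local connectedness lets us shrink G to a cover by connected open
   sets, keeping the star property.
   The overlay structure consists of the pieces  U_s ∩ p^{-1}(W)  where W is in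
   G and (U_s) are the sheets over an evenly covered V containing W.  Since W
   is connected, every sheet over W through x lies in the sheet through x of
   an evenly covered V containing the star of p(x); hence the star of x is
   that sheet cut down to the (open) star of p(x), which is a slice. *)

Lemma set_ext {T : Type} (A B : T -> Prop) : (forall x, A x <-> B x) -> A = B.
Proof.
  intro H; apply functional_extensionality; intro x; apply propositional_extensionality; auto.
Qed.

Section OpenSets.
Variable T : TopSpace.

Lemma open_ext (A B : T -> Prop) : is_open T A -> (forall x, A x <-> B x) -> is_open T B.
Proof. intros HA H; rewrite <- (set_ext A B H); exact HA. Qed.

Lemma open_local (A : T -> Prop) :
  (forall x, A x -> exists N, is_open T N /\ N x /\ forall w, N w -> A w) -> is_open T A.
Proof.
  intro H.
  apply (open_ext (fun x => exists N, (is_open T N /\ forall w, N w -> A w) /\ N x)).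
  - apply open_union. intros N [HN _]; exact HN.
  - intro x; split.
    + intros [N [[_ HN] Nx]]; auto.
    + intro Ax; destruct (H x Ax) as [N [No [Nx HN]]]; exists N; auto.
Qed.

Lemma finite_nbhd (A : Type) (P : A -> T -> Prop) (z : T) (l : list A) :
  (forall a, In a l -> exists Q, is_open T Q /\ Q z /\ forall w, Q w -> P a w) ->
  exists M, is_open T M /\ M z /\ forall a, In a l -> forall w, M w -> P a w.
Proof.
  induction l as [|a l IH]; intro H.
  - exists (fun _ => True); split; [apply open_full|split; auto]. intros a [].
  - destruct (H a (or_introl eq_refl)) as [Q [Qo [Qz HQ]]].
    destruct IH as [M [Mo [Mz HM]]].
    { intros b Hb; apply H; right; exact Hb. }
    exists (fun w => Q w /\ M w); split; [apply open_inter; auto|split; auto].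
    intros b [<-|Hb] w [Qw Mw]; auto.
Qed.

Lemma open_finite_inter (A : Type) (Q : A -> T -> Prop) (l : list A) :
  (forall a, In a l -> is_open T (Q a)) -> is_open T (fun z => forall a, In a l -> Q a z).
Proof.
  intro Ho. apply open_local. intros z Hz.
  destruct (finite_nbhd _ Q z l) as [M [Mo [Mz HM]]].
  - intros a Ha. exists (Q a); auto.
  - exists M; split; [exact Mo|split; [exact Mz|]]. intros w Mw a Ha; exact (HM a Ha w Mw).
Qed.

Definition cl (A : T -> Prop) (z : T) :=
  forall N, is_open T N -> N z -> exists w, N w /\ A w.

Lemma cl_mono (A B : T -> Prop) z : (forall w, A w -> B w) -> cl A z -> cl B z.
Proof. intros H HA N No Nz; destruct (HA N No Nz) as [w [Nw Aw]]; eauto. Qed.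

Lemma cl_sub (A : T -> Prop) z : A z -> cl A z.
Proof. intros Az N _ Nz; eauto. Qed.

Lemma paracompact_regular : paracompact T -> forall (y : T) V, is_open T V -> V y ->
  exists O, is_open T O /\ O y /\ forall z, cl O z -> V z.
Proof.
  intros [Hhd Hpc] y V Vo Vy.
  (* cover by V and by open sets separated from y that meet the complement of V *)
  set (F0 := fun A : T -> Prop => A = V \/ (is_open T A /\ exists k B, ~ V k /\ A k /\
             is_open T B /\ B y /\ forall w, A w -> B w -> False)).
  assert (HF0 : open_cover T F0).
  { split.
    - intros A [->|[Ao _]]; auto.
    - intro z. destruct (classic (V z)) as [Vz|nVz].
      + exists V; split; [left; reflexivity|exact Vz].
      + assert (z <> y) by (intro e; subst; auto).
        destruct (Hhd z y H) as [A [B [Ao [Bo [Az [By Hd]]]]]].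
        exists A; split; auto. right; split; auto. exists z, B; auto. }
  destruct (Hpc F0 HF0) as [G [[Gopen Gcov] [Gref Glf]]].
  destruct (Glf y) as [N [No [Ny [l Hl]]]].
  destruct (finite_nbhd _ (fun D w => G D -> (exists k, ~ V k /\ D k) -> ~ D w) y l)
    as [M [Mo [My HM]]].
  { intros D _. destruct (classic (G D /\ exists k, ~ V k /\ D k)) as [[GD [k [nVk Dk]]]|Hn].
    - destruct (Gref D GD) as [A [FA HDA]].
      destruct FA as [->|[Ao [k' [B [_ [_ [Bo [By Hd]]]]]]]].
      + exfalso; apply nVk; auto.
      + exists B; split; auto; split; auto. intros w Bw _ _ Dw; apply (Hd w); auto.
    - exists (fun _ => True); split; [apply open_full|split; [exact I|]].
      intros w _ GD HE; exfalso; apply Hn; auto. }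
  exists (fun w => N w /\ M w); split; [apply open_inter; auto|split; auto].
  intros z Hz. apply NNPP; intro nVz.
  destruct (Gcov z) as [D [GD Dz]].
  destruct (Hz D (Gopen D GD) Dz) as [w [Dw [Nw Mw]]].
  assert (In D l) by (apply Hl; eauto).
  apply (HM D H w Mw GD); eauto.
Qed.

Lemma closure_refinement : paracompact T -> forall F, open_cover T F ->
  exists (G : (T -> Prop) -> Prop) (f : (T -> Prop) -> T -> Prop),
    open_cover T G /\ locally_finite T G /\
    forall B, G B -> F (f B) /\ forall z, cl B z -> f B z.
Proof.
  intros Hpar F [Fopen Fcov].
  set (F2 := fun O => is_open T O /\ exists A, F A /\ forall z, cl O z -> A z).
  assert (HF2 : open_cover T F2).
  { split; [intros O [Oo _]; auto|].
    intro y. destruct (Fcov y) as [A [FA Ay]].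
    destruct (paracompact_regular Hpar y A (Fopen A FA) Ay) as [O [Oo [Oy HO]]].
    exists O; split; auto. split; eauto. }
  destruct (proj2 Hpar F2 HF2) as [G [HG [Gref Glf]]].
  assert (Hf : forall B, G B -> exists A, F A /\ forall z, cl B z -> A z).
  { intros B GB. destruct (Gref B GB) as [O [[_ [A [FA HA]]] HBO]].
    exists A; split; auto. intros z Hz; apply HA; eapply cl_mono; eauto. }
  exists G, (fun B => epsilon (inhabits (fun _ : T => True))
                       (fun A => F A /\ forall z, cl B z -> A z)).
  split; [exact HG|split; [exact Glf|]].
  intros B GB; apply epsilon_spec, Hf, GB.
Qed.

(* For a locally finite family, the points avoiding the closures of any chosen
   subfamily form an open set (a locally finite union of closed sets is closed). *)
Lemma closure_avoid_open (G P : (T -> Prop) -> Prop) :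
  locally_finite T G -> is_open T (fun z => forall B, G B -> P B -> ~ cl B z).
Proof.
  intro Glf. apply open_local. intros z Hz.
  destruct (Glf z) as [N [No [Nz [l Hl]]]].
  destruct (finite_nbhd _ (fun D w => G D -> P D -> ~ D w) z l) as [M [Mo [Mz HM]]].
  { intros D _. destruct (classic (G D /\ P D)) as [[GD PD]|Hn].
    - apply NNPP; intro nQ; apply (Hz D GD PD). intros Q Qo Qz. apply NNPP; intro nex.
      apply nQ. exists Q; split; auto; split; auto. intros w Qw _ _ Dw; apply nex; eauto.
    - exists (fun _ => True); split; [apply open_full|split; [exact I|]].
      intros; exfalso; auto. }
  exists (fun w => N w /\ M w); split; [apply open_inter; auto|split; [auto|]].
  intros w [Nw Mw] B GB PB cBw.
  destruct (cBw (fun u => N u /\ M u)) as [u [[Nu Mu] Bu]]; [apply open_inter; auto|auto|].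
  exact (HM B (Hl B GB (ex_intro _ u (conj Nu Bu))) u Mu GB PB Bu).
Qed.

Lemma star_refinement : paracompact T -> forall F, open_cover T F ->
  exists G, open_cover T G /\
    forall z, exists A, F A /\ forall W, G W -> W z -> forall w, W w -> A w.
Proof.
  intros Hpar F HF.
  destruct (closure_refinement Hpar F HF) as [G [f [[Gopen Gcov] [Glf Hf]]]].
  destruct HF as [Fopen _].
  (* W y N l: the points of the neighbourhood N of y (which meets only the members
     l of G) lying in f B for each B in l with y in cl B, and in no cl B missing y *)
  set (Wd := fun (y : T) (N : T -> Prop) (l : list (T -> Prop)) (z : T) =>
     N z /\ (forall B, In B l -> G B -> cl B y -> f B z) /\
     (forall B, G B -> ~ cl B y -> ~ cl B z)).
  exists (fun W => exists y N l, (is_open T N /\ N y /\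
            forall B, G B -> (exists z, N z /\ B z) -> In B l) /\ W = Wd y N l).
  split; [split|].
  - intros W [y [N [l [[No _] ->]]]]. unfold Wd. repeat apply open_inter.
    + exact No.
    + apply open_finite_inter. intros B _.
      destruct (classic (G B /\ cl B y)) as [[GB cB]|Hn].
      * apply (open_ext (f B)); [apply Fopen, Hf; auto|].
        intro z; split; [intros fBz _ _; exact fBz|intro H; apply H; auto].
      * apply (open_ext (fun _ => True)); [apply open_full|].
        intro z; split; auto. intros _ GB cB; exfalso; auto.
    + exact (closure_avoid_open G (fun B => ~ cl B y) Glf).
  - intro y. destruct (Glf y) as [N [No [Ny [l Hl]]]].
    exists (Wd y N l). split.
    + exists y, N, l; split; [split; auto|reflexivity].
    + split; [exact Ny|split; auto]. intros B _ GB cB; apply Hf; auto.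
  - intro z. destruct (Gcov z) as [B0 [GB0 B0z]].
    exists (f B0); split; [apply Hf; auto|].
    intros W [y [N [l [[No [Ny Hl]] ->]]]] [Nz [_ Havoid]] w [Nw [Hw _]].
    assert (cy : cl B0 y) by (apply NNPP; intro n; apply (Havoid B0 GB0 n), cl_sub, B0z).
    destruct (cy N No Ny) as [u [Nu B0u]].
    apply Hw; auto; apply Hl; eauto.
Qed.

Lemma connected_star_refinement : paracompact T -> locally_connected T ->
  forall F, open_cover T F ->
  exists G, (forall W, G W -> is_open T W /\ connected_set T W) /\
    (forall y, exists W, G W /\ W y) /\
    forall z, exists A, F A /\ forall W, G W -> W z -> forall w, W w -> A w.
Proof.
  intros Hpar Hlc F HF.
  destruct (star_refinement Hpar F HF) as [G [[Gopen Gcov] Gstar]].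
  exists (fun C => is_open T C /\ connected_set T C /\ exists W, G W /\ forall w, C w -> W w).
  split; [|split].
  - intros W [Wo [Wc _]]; auto.
  - intro y. destruct (Gcov y) as [W [GW Wy]].
    destruct (Hlc y W (Gopen W GW) Wy) as [C [Co [Cc [Cy HC]]]].
    exists C; split; [split; [auto|split; [auto|eauto]]|auto].
  - intro z. destruct (Gstar z) as [A [FA HA]]. exists A; split; auto.
    intros C [_ [_ [W [GW HCW]]]] Cz w Cw. apply (HA W GW); auto.
Qed.
End OpenSets.

Section Sheets.
Variables X Y : TopSpace.
Variable p : X -> Y.

Lemma homeo_restrict (A : X -> Prop) (V W : Y -> Prop) :
  homeo_onto p A V -> (forall y, W y -> V y) ->
  homeo_onto p (fun x => A x /\ W (p x)) W.
Proof.
  intros [H1 [H2 [H3 [H4 H5]]]] HWV.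
  split; [|split; [|split; [|split]]].
  - intros x [_ Wx]; exact Wx.
  - intros y Wy. destruct (H2 y (HWV y Wy)) as [x [Ax e]]. subst. exists x; auto.
  - intros x1 x2 [A1 _] [A2 _]; apply H3; auto.
  - intros O Oo. destruct (H4 O Oo) as [O' [O'o HO']]. exists O'; split; auto.
    intros x [Ax _]; auto.
  - intros Wx Wxo. destruct (H5 Wx Wxo) as [O [Oo HO]]. exists O; split; auto.
    intros y Wy. rewrite (HO y (HWV y Wy)). split.
    + intros [x [Ax [Wxx e]]]; subst; exists x; auto.
    + intros [x [[Ax _] [Wxx e]]]; eauto.
Qed.

Lemma sheets_restrict (V W : Y -> Prop) (S : Type) (Us : S -> X -> Prop) :
  continuous p -> disjoint_sheets p V Us -> is_open Y W -> (forall y, W y -> V y) ->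
  disjoint_sheets p W (fun t x => Us t x /\ W (p x)).
Proof.
  intros pc [H1 [H2 [H3 H4]]] Wo HWV.
  split; [|split; [|split]].
  - intro s. apply open_inter; [auto|apply pc; auto].
  - intros s t x [A _] [B _]; eauto.
  - intro x; split.
    + intro Wx. destruct (proj1 (H3 x) (HWV _ Wx)) as [s Hs]; eauto.
    + intros [s [_ Wx]]; exact Wx.
  - intro s; apply homeo_restrict with V; auto.
Qed.

Lemma image_restrict (V W : Y -> Prop) (S : Type) (Us : S -> X -> Prop) s :
  disjoint_sheets p V Us -> (forall y, W y -> V y) ->
  image p (fun x => Us s x /\ W (p x)) = W.
Proof.
  intros [_ [_ [_ H4]]] HWV. apply set_ext; intro y; split.
  - intros [x [[_ Wx] e]]; subst; auto.
  - intro Wy. destruct (H4 s) as [_ [H2 _]].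
    destruct (H2 y (HWV y Wy)) as [x [Ax e]]; subst. exists x; auto.
Qed.

Lemma slice_restrict (V W : Y -> Prop) (S : Type) (Us : S -> X -> Prop) s :
  continuous p -> disjoint_sheets p V Us -> is_open Y W -> (forall y, W y -> V y) ->
  slice p (fun x => Us s x /\ W (p x)).
Proof.
  intros pc Hs Wo HWV. split.
  - apply open_inter; [apply (proj1 Hs)|apply pc; auto].
  - exists S, (fun t x => Us t x /\ W (p x)).
    erewrite image_restrict; [|exact Hs|exact HWV].
    split; [apply sheets_restrict with V; auto|].
    exists s; reflexivity.
Qed.

(* Over a connected W inside both V and V', a sheet over V' meeting the sheet
   [Us s0] over V at a point above W stays inside [Us s0] above W: otherwise the
   sheets over V would split W into two disjoint nonempty open pieces. *)
Lemma connected_sheet_inclusion (V V' W : Y -> Prop) (S : Type) (Us : S -> X -> Prop)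
  (S' : Type) (Us' : S' -> X -> Prop) s0 s' x :
  connected_set Y W -> (forall y, W y -> V y) -> (forall y, W y -> V' y) ->
  disjoint_sheets p V Us -> disjoint_sheets p V' Us' -> Us' s' x -> W (p x) ->
  Us s0 x -> forall z, Us' s' z -> W (p z) -> Us s0 z.
Proof.
  intros Wc HWV HWV' [Uo [Ud [Ucov _]]] [_ [_ [_ Hh']]] Hx Wx Hx0 z Hz Wz.
  apply NNPP; intro Hn.
  destruct (Hh' s') as [_ [Honto [Hinj [_ Hopen]]]].
  assert (Bo : is_open X (fun w => exists t, t <> s0 /\ Us t w)).
  { apply (open_ext X (fun w => exists A, (exists t, t <> s0 /\ A = Us t) /\ A w)).
    - apply open_union. intros A [t [_ ->]]; auto.
    - intro w; split.
      + intros [A [[t [nt ->]] Aw]]; eauto.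
      + intros [t [nt Ht]]. exists (Us t); split; eauto. }
  destruct (Hopen (Us s0) (Uo s0)) as [OA [OAo HOA]].
  destruct (Hopen _ Bo) as [OB [OBo HOB]].
  apply (Wc OA OB OAo OBo).
  - intros y Wy. destruct (Honto y (HWV' y Wy)) as [x' [Hx' e]]. subst y.
    destruct (proj1 (Ucov x') (HWV _ Wy)) as [t Ht].
    destruct (classic (t = s0)) as [->|nt].
    + left. apply (HOA _ (HWV' _ Wy)). exists x'; auto.
    + right. apply (HOB _ (HWV' _ Wy)). exists x'; split; auto; split; eauto.
  - intros y Wy HA HB.
    apply (HOA _ (HWV' _ Wy)) in HA. apply (HOB _ (HWV' _ Wy)) in HB.
    destruct HA as [x1 [U1 [A1 e1]]]. destruct HB as [x2 [U2 [[t [nt B2]] e2]]].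
    assert (x1 = x2) by (apply Hinj; auto; congruence). subst x2.
    apply nt. symmetry; exact (Ud _ _ _ A1 B2).
  - exists (p x); split; auto. apply (HOA _ (HWV' _ Wx)). exists x; auto.
  - exists (p z); split; auto. apply (HOB _ (HWV' _ Wz)). exists z; split; auto.
    split; auto. destruct (proj1 (Ucov z) (HWV _ Wz)) as [t Ht].
    exists t; split; auto. intros ->; auto.
Qed.

Definition evenly_covered (V : Y -> Prop) : Prop :=
  is_open Y V /\ exists (S : Type) (Us : S -> X -> Prop), disjoint_sheets p V Us.

Definition sheet_pieces (G : (Y -> Prop) -> Prop) (U : X -> Prop) : Prop :=
  exists (W V : Y -> Prop) (S : Type) (Us : S -> X -> Prop) (s : S),
    G W /\ (forall y, W y -> V y) /\ disjoint_sheets p V Us /\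
    U = (fun x => Us s x /\ W (p x)).

Section OverlayStructure.
Hypothesis p_continuous : continuous p.
Variable G : (Y -> Prop) -> Prop.
Hypothesis G_open_connected : forall W, G W -> is_open Y W /\ connected_set Y W.
Hypothesis G_cover : forall y, exists W, G W /\ W y.
Hypothesis G_star : forall z, exists V, evenly_covered V /\
  forall W, G W -> W z -> forall w, W w -> V w.

Lemma sheet_pieces_covering_structure : covering_structure p (sheet_pieces G).
Proof.
  split; [|split].
  - intros U [W [V [S [Us [s [GW [HWV [Hs ->]]]]]]]].
    apply slice_restrict with V; auto. apply G_open_connected; auto.
  - intro x. destruct (G_cover (p x)) as [W [GW Wx]].
    destruct (G_star (p x)) as [V [[Vo [S [Us Hs]]] HV]].
    assert (HWV : forall y, W y -> V y) by (intros; eapply HV; eauto).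
    destruct (proj1 (proj1 (proj2 (proj2 Hs)) x) (HWV _ Wx)) as [s Hsx].
    exists (fun x => Us s x /\ W (p x)). split; [|auto].
    exists W, V, S, Us, s; auto.
  - intros U [W [V [S [Us [s [GW [HWV [Hs ->]]]]]]]].
    exists S, (fun t x => Us t x /\ W (p x)). split.
    + intro t. exists W, V, S, Us, t; auto.
    + erewrite image_restrict; [|exact Hs|exact HWV].
      apply sheets_restrict with V; auto. apply G_open_connected; auto.
Qed.

(* The star of x is the sheet through x over an evenly covered V containing the
   star of p(x) w.r.t. G, cut down to that star; hence it is a slice. *)
Lemma star_sheet_pieces_slice (x : X) : slice p (star (sheet_pieces G) x).
Proof.
  destruct (G_cover (p x)) as [W0 [GW0 W0x]].
  destruct (G_star (p x)) as [V [[Vo [S0 [Us0 Hs0]]] HV]].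
  destruct (proj1 (proj1 (proj2 (proj2 Hs0)) x) (HV W0 GW0 W0x (p x) W0x)) as [s0 Hsx].
  set (starG := fun z => exists W, G W /\ W (p x) /\ W z).
  assert (E : star (sheet_pieces G) x = fun z => Us0 s0 z /\ starG (p z)).
  { apply set_ext; intro z; split.
    - intros [U [[W' [V' [S' [Us' [s' [GW' [HWV' [Hs' ->]]]]]]]] [[Ux Wx] [Uz Wz]]]].
      split; [|exists W'; auto].
      apply (connected_sheet_inclusion V V' W' S0 Us0 S' Us' s0 s' x); auto.
      + apply G_open_connected; auto.
      + intros; eapply HV; eauto.
    - intros [Hz [W [GW [Wy Wz]]]].
      exists (fun x => Us0 s0 x /\ W (p x)). split; [|split; split; auto].
      exists W, V, S0, Us0, s0. split; auto. split; auto.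
      intros; eapply HV; eauto. }
  rewrite E. apply slice_restrict with V; auto.
  - apply (open_ext Y (fun z => exists A, (G A /\ A (p x)) /\ A z)).
    + apply open_union. intros A [GA _]; apply G_open_connected; auto.
    + intro z; split; [intros [A [[GA Ax] Az]]|intros [A [GA [Ax Az]]]]; exists A; auto.
  - intros y [W [GW [Wx Wy]]]. eapply HV; eauto.
Qed.
End OverlayStructure.
End Sheets.

Arguments evenly_covered {X Y} p V.
Arguments sheet_pieces {X Y} p G U.

Theorem corollary4p8 (X Y : TopSpace) (p : X -> Y) :
  covering_map p -> locally_connected Y -> paracompact Y -> overlay p.
Proof.
  intros [pc [_ ploc]] Hlc Hpar.
  assert (HF : open_cover Y (evenly_covered p)).
  { split; [intros A [Ao _]; exact Ao|].
    intro y. destruct (ploc y) as [V [Vo [Vy HS]]]. exists V; split; [split|]; auto. }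
  destruct (connected_star_refinement Y Hpar Hlc _ HF) as [G [Gprop [Gcov Gstar]]].
  exists (sheet_pieces p G). split.
  - apply sheet_pieces_covering_structure; auto.
  - intro x. apply star_sheet_pieces_slice; auto.
Qed.
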